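(* Let $G(n)=\sum_{k=0}^n(-1)^k\binom nk \binom{2k}{k+1}\binom{2n-2k}{n-k}$ for integers $n\ge 0$. Then $(n+1)^2G(n)=16n^2G(n-2)$ for all $n\ge 2$, and consequently for all $n\ge 0$, $$G(2n+1)=-\binom{2n+1}{n}^2,\qquad G(2n)=0.$$
   Context: Binomial coefficients $\binom{m}{j}$ are zero when $j>m$. *)

From HB Require Import structures.
From mathcomp Require Import all_boot all_order all_algebra.
Set Implicit Arguments. Unset Strict Implicit. Unset Printing Implicit Defensive.
Import Order.TTheory GRing.Theory Num.Theory.
Local Open Scope ring_scope.

Definition G (n : nat) : int :=
  \sum_(k < n.+1)
    (-1) ^+ k * ('C(n, k) * 'C(2 * k, k.+1) * 'C(2 * n - 2 * k, n - k))%:R.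

(* G(n) is the coefficient of x^n y^(n+1) in (y (x+1)^2 - x (y+1)^2)^n, and this
   binomial factors as (x - y)(x y - 1).  In (x - y)^n (x y - 1)^n a monomial
   x^n y^(n+1) can only come from (-y)^(j+1) x^j and (x y)^(j+1) (-1)^j with
   n = 2j + 1, which gives both closed forms; the recurrence then reduces to
   the identity (j + 2) C(2j+3, j+1) = 2 (2j+3) C(2j+1, j). *)
From HB Require Import structures.
From mathcomp Require Import all_boot all_order all_algebra.
From mathcomp Require Import ring zify.
Import GRing.Theory.
Local Open Scope ring_scope.

Lemma bin_double_center m : 'C((2 * m).+2, m.+1) = (2 * 'C((2 * m).+1, m))%N.
Proof.
apply/eqP; rewrite -(eqn_pmul2l (ltn0Sn m)) -mul_bin_diag /=.
rewrite mulnCA mulnA; apply/eqP; congr (_ * _)%N; lia.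
Qed.

Lemma mul_bin_center_odd m :
  (m.+2 * 'C((2 * m).+3, m.+1) = 2 * (2 * m).+3 * 'C((2 * m).+1, m))%N.
Proof.
have -> : 'C((2 * m).+3, m.+1) = 'C((2 * m).+3, m.+2).
  by rewrite -[in RHS]bin_sub; [congr binomial | ]; lia.
rewrite -mul_bin_diag /= bin_double_center.
by rewrite mulnCA mulnA.
Qed.

Section BivariatePolynomials.
Variable R : comNzRingType.
Implicit Types p q : {poly R}.

Lemma coef_Xadd1_exp m i : (('X + 1 : {poly R}) ^+ m)`_i = 'C(m, i)%:R.
Proof.
have -> : ('X + 1 : {poly R}) ^+ m = \poly_(k < m.+1) 'C(m, k)%:R.
  rewrite poly_def addrC exprDn; apply: eq_bigr => k _.
  by rewrite expr1n mul1r scaler_nat.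
by rewrite coef_poly; case: ltnP => // /bin_small ->.
Qed.

Lemma coef_mapC_mulC p q i j : ((p ^:P * q%:P)`_i)`_j = p`_i * q`_j.
Proof. by rewrite coefMC coef_map /= coefCM. Qed.

End BivariatePolynomials.

Local Notation x := ('X : {poly {poly int}}).
Local Notation y := (('X : {poly int})%:P : {poly {poly int}}).

Lemma G_coef_binomial_power n :
  G n = ((((y * (x + 1) ^+ 2 - x * (y + 1) ^+ 2) ^+ n)`_n)`_n.+1).
Proof.
rewrite exprBn coef_sum coef_sum /G; apply: eq_bigr => -[k /= ltkn] _.
rewrite ltnS in ltkn.
have -> : (-1) ^+ k * (y * (x + 1) ^+ 2) ^+ (n - k) * (x * (y + 1) ^+ 2) ^+ k
    = ('X^k * ('X + 1) ^+ (2 * (n - k)))^:P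
      * (((-1) ^+ k)%:P * ('X^(n - k) * ('X + 1) ^+ (2 * k)))%:P.
  rewrite !(rmorphM, rmorphXn, rmorphD, rmorphN, rmorph1) /= map_polyX.
  by rewrite !exprMn !mul2n -!addnn !exprD; ring.
rewrite coefMn coefMn coef_mapC_mulC coefXnM ltnNge ltkn coefCM coefXnM.
rewrite ltnNge (leq_trans (leq_subr k n) (leqnSn n)) /= !coef_Xadd1_exp.
rewrite subSn ?leq_subr // subKn // -mulnBr -[_ *+ 'C(n, k)]mulr_natr !natrM.
ring.
Qed.

Lemma G_double_sum n :
  G n = \sum_(i < n.+1) \sum_(j < n.+1)
          if (i + j == n)%N && (i == j.+1 :> nat)
          then (-1) ^+ (i + j)%N * ('C(n, i) * 'C(n, j))%:R else 0.
Proof.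
have factor : y * (x + 1) ^+ 2 - x * (y + 1) ^+ 2 = (x - y) * (x * y - 1) by ring.
rewrite G_coef_binomial_power factor exprMn !exprBn mulr_suml.
rewrite !coef_sum; apply: eq_bigr => -[i /= ltin] _.
rewrite mulr_sumr !coef_sum; apply: eq_bigr => -[j /= ltjn] _.
have -> : ((-1) ^+ i * x ^+ (n - i) * y ^+ i) *+ 'C(n, i)
          * (((-1) ^+ j * (x * y) ^+ (n - j) * 1 ^+ j) *+ 'C(n, j))
    = ('X^(n - i + (n - j)))^:P
      * (((-1) ^+ (i + j) * ('C(n, i) * 'C(n, j))%:R)%:P * 'X^(i + (n - j)))%:P.
  rewrite !(rmorphM, rmorphXn, rmorphD, rmorphN, rmorph1) /= map_polyX !rmorph_nat.
  rewrite ?natrM expr1n !exprD exprMn.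
  rewrite -[_ *+ 'C(n, i)]mulr_natr -[_ *+ 'C(n, j)]mulr_natr.
  by move: (n - i)%N (n - j)%N => p q; ring.
rewrite coef_mapC_mulC coefCM !coefXn.
have -> : (n == n - i + (n - j))%N = (i + j == n)%N by apply/eqP/eqP; lia.
have -> : (n.+1 == i + (n - j))%N = (i == j.+1) by apply/eqP/eqP; lia.
by case: (i + j == n)%N; case: (i == j.+1); rewrite ?mul0r ?mulr0 ?mul1r ?mulr1.
Qed.

Lemma G_even m : G (2 * m) = 0.
Proof.
rewrite G_double_sum big1 // => i _; rewrite big1 // => j _.
by rewrite ifN //; apply/negP => /andP[/eqP ? /eqP ?]; lia.
Qed.

Lemma G_odd m : G (2 * m).+1 = - ('C((2 * m).+1, m) ^ 2)%:R.
Proof.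
have ltm1 : (m.+1 < (2 * m).+2)%N by lia.
have ltm : (m < (2 * m).+2)%N by lia.
rewrite G_double_sum pair_bigA /= -big_mkcond /=.
rewrite (big_pred1 (Ordinal ltm1, Ordinal ltm)) /=; last first.
  move=> [i j]; rewrite /= xpair_eqE -!val_eqE /=.
  by apply/andP/andP => -[/eqP ? /eqP ?]; split; apply/eqP; lia.
have -> : (m.+1 + m = (2 * m).+1)%N by lia.
have -> : 'C((2 * m).+1, m.+1) = 'C((2 * m).+1, m).
  by rewrite -bin_sub; [congr binomial | ]; lia.
by rewrite mulnn exprS exprM sqrrN !expr1n mulr1 mulN1r.
Qed.

Lemma G_recurrence n : (2 <= n)%N ->
  (n.+1 ^ 2)%:R * G n = (16 * n ^ 2)%:R * G (n - 2).
Proof.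
rewrite -[n]odd_double_half -mul2n; case: (odd n); rewrite ?add1n ?add0n.
- case: n./2 => [|m] // _.
  have -> : ((2 * m.+1).+1 - 2 = (2 * m).+1)%N by lia.
  rewrite !G_odd !mulrN -!natrM; congr (- _%:R).
  have := mul_bin_center_odd m.
  have -> : ((2 * m).+3 = (2 * m.+1).+1)%N by lia.
  move: 'C(_, m.+1) 'C(_, m) => c c'; nia.
- have -> : (2 * n./2 - 2 = 2 * n./2.-1)%N by lia.
  by rewrite !G_even !mulr0.
Qed.

Theorem mainTheorem4 :
  (forall n : nat, (2 <= n)%N ->
     (n.+1 ^ 2)%:R * G n = (16 * n ^ 2)%:R * G (n - 2)%N) /\
  (forall n : nat,
     G (2 * n).+1 = - ('C((2 * n).+1, n) ^ 2)%:R /\ G (2 * n) = 0).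
Proof.
split; first exact: G_recurrence.
by move=> n; rewrite G_odd G_even.
Qed.
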